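(* Let $D$ be a normalized 2-page book drawing of $K_n$, let $D_1$ be the drawing of $K_{n-1}$ obtained by deleting vertex $n$ and its incident edges, and let $p$ be an integer with $0\le p\le\lfloor n/2\rfloor-2$. Suppose that $E_{\le k}(D,D_1)=\binom{k+2}2$ for all $0\le k\le p$. Then for each $1\le i\le p+1$, row $i$ of $M(D)$ contains exactly one entry representing a $(D,D_1)$-invariant $k$-edge for each $k$ with $i-1\le k\le p$, and no entry representing a $(D,D_1)$-invariant $j$-edge with $j\le i-2$; and every row $i$ with $i\ge p+2$ contains no entry representing a $(D,D_1)$-invariant $j$-edge with $j\le p$.
   Context: Normalized 2-page book drawing of $K_n$: vertices $(1,0),\dots,(n,0)$ labelled $1,\dots,n$; edges $i(i+1)$ on the spine; edge $1n$ in the upper half-plane; every other edge $ij$ a semicircle over $[i,j]$ in the upper or lower half-plane. $M(D)$ has entries $(i,j)$, $1\le i<j\le n$ (row $i$, column $j$), entry $(i,j)$ representing edge $ij$. In a good drawing of $K_m$, for distinct vertices $p,q,r$, $r$ is on the left (right) of $\overrightarrow{pq}$ if the triangle with edges $pq,qr,rp$ traced in order $p,q,r$ is counterclockwise (clockwise); an edge is a $k$-edge if exactly $k$ of the other $m-2$ vertices lie on one side of it, and it has a unique such index in $\{0,\dots,\lfloor m/2\rfloor-1\}$. An edge $ij$ of $D$ not incident to $n$ is a $(D,D_1)$-invariant $k$-edge if its index in $D$ is $k$ and it is also a $k$-edge in $D_1$ (exactly $k$ vertices of $D_1$ on one side). $E_{\le k}(D,D_1)$ is the number of $(D,D_1)$-invariant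 $j$-edges with $0\le j\le k$. *)

From mathcomp Require Import all_boot.
Set Implicit Arguments. Unset Strict Implicit. Unset Printing Implicit Defensive.

(* A normalized 2-page book drawing of K_n, vertices labelled 1..n at (1,0)..(n,0).
   Spine edges i(i+1) carry no data.  For a non-spine edge ac (a + 2 <= c),
   [up a c] is true iff the semicircle over [a,c] lies in the upper half-plane.
   Normalization (edge 1n upper) is imposed as the hypothesis [up 1 n].
   Values of [up a c] outside 1 <= a, a + 2 <= c <= n are never consulted. *)
Definition drawing := nat -> nat -> bool.

(* For a < b < c, the triangle ab, bc, ca traced a -> b -> c is counterclockwise
   iff the edge ac is in the upper page (the path a -> b -> c lies inside the
   arc ac, nested semicircles not crossing).  For a general ordered triple
   (p,q,r) of distinct vertices the orientation is that of the sorted triple if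
   (p,q,r) is a cyclic rotation of it (even permutation), and reversed otherwise. *)
Definition even_order (p q r : nat) : bool := ((p < q) + (q < r) + (r < p) == 2)%N.

Definition lo3 (p q r : nat) := minn p (minn q r).
Definition hi3 (p q r : nat) := maxn p (maxn q r).

Definition left_of (up : drawing) (p q r : nat) : bool :=
  if even_order p q r then up (lo3 p q r) (hi3 p q r)
  else ~~ up (lo3 p q r) (hi3 p q r).

Definition left_cnt (up : drawing) (m p q : nat) : nat :=
  count (fun r => (r != p) && (r != q) && left_of up p q r) (iota 1 m).
Definition right_cnt (up : drawing) (m p q : nat) : nat :=
  count (fun r => (r != p) && (r != q) && ~~ left_of up p q r) (iota 1 m).

Definition edge_index (up : drawing) (n p q : nat) : nat :=
  minn (left_cnt up n p q) (right_cnt up n p q).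

Definition invariant_edge (up : drawing) (n i j k : nat) : bool :=
  [&& 1 <= i, i < j, j < n, edge_index up n i j == k &
      (left_cnt up n.-1 i j == k) || (right_cnt up n.-1 i j == k)].

Definition E_le (up : drawing) (n k : nat) : nat :=
  \sum_(1 <= i < n) \sum_(i.+1 <= j < n)
     has (invariant_edge up n i j) (iota 0 k.+1).

From mathcomp Require Import all_boot zify.

(* Let n = m + 1.  For small t, an edge ij of D_1 is a (D,D_1)-invariant t-edge
   exactly when t vertices of D_1 lie on the side of ij away from n; call this
   number far(i,j), and let c_i(k) be the number of j > i with far(i,j) <= k,
   so that E_{<=k}(D,D_1) = sum_i c_i(k).  In row i the vertices r < i add at
   most i - 1 to far(i,j), and the vertices r > i behave like a tournament
   score determined by the pages of the arcs ir and in; counting small scores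
   gives c_i(k) >= k + 2 - i.  These lower bounds already sum to C(k+2,2), so
   the hypothesis forces c_i(k) = k + 2 - i in every row (0 from row k + 2 on),
   and differencing in k leaves exactly one invariant k-edge in each row
   i <= k + 1 and none below. *)

Set Implicit Arguments.
Unset Strict Implicit.
Unset Printing Implicit Defensive.

Lemma iotaSr m n : iota m n.+1 = iota m n ++ [:: m + n].
Proof. by rewrite -addn1 iotaD. Qed.

Lemma count_andC (T : Type) (a b : pred T) s :
  count (fun x => a x && b x) s + count (fun x => a x && ~~ b x) s = count a s.
Proof. by elim: s => //= x s <-; case: (a x); case: (b x); rewrite /=; lia. Qed.

Lemma count_leq_eq_ltn (T : Type) (f : T -> nat) k (s : seq T) :
  count (fun x => f x <= k) s = count (fun x => f x == k) s + count (fun x => f x < k) s.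
Proof. by elim: s => //= x s ->; case: ltngtP; lia. Qed.

Lemma sub_in_count (T : eqType) (a1 a2 : pred T) (s : seq T) :
  {in s, subpred a1 a2} -> count a1 s <= count a2 s.
Proof.
elim: s => //= x s IH sub12; apply: leq_add.
  by case a1x: (a1 x); rewrite // (sub12 x (mem_head x s) a1x).
by apply: IH => y ys; apply: sub12; rewrite inE ys orbT.
Qed.

Lemma eq_in_sum_leq (I : eqType) (r : seq I) (lo c : I -> nat) :
  {in r, forall i, lo i <= c i} -> \sum_(i <- r) c i <= \sum_(i <- r) lo i ->
  {in r, c =1 lo}.
Proof.
move=> lo_c sum_c.
have : \sum_(i <- r) (c i - lo i) == 0.
  by rewrite big_seq_cond (@sumnB _ _ _ lo c) -?big_seq_cond ?subn_eq0 // => i /andP[/lo_c].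
rewrite sum_nat_seq_eq0 => /allP zero_excess i ri.
by apply/eqP; rewrite eqn_leq -subn_eq0 (implyP (zero_excess i ri)) // lo_c.
Qed.

Lemma sum_sub_bin2 m n : m <= n -> \sum_(1 <= i < n) (m - i) = 'C(m, 2).
Proof.
case: m => [|m] mn; first by rewrite big1.
rewrite (@big_cat_nat _ _ _ m.+1) //= [X in _ + X]big1_seq ?addn0; last first.
  by move=> i /andP[_]; rewrite mem_index_iota; lia.
rewrite big_nat_rev -bin2_sum [RHS]big_ltn //= add0n.
by apply: eq_big_nat => i /andP[i1 im]; rewrite add1n subSS; lia.
Qed.

(* For j in [a, a + N): the r < j of [a, a + N) all count iff [~~ d j], the
   r > j count iff [d r].  In row i, with [d r] saying that the arcs ir and in
   lie in different pages, this counts the vertices r > i on the far side of ij. *)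
Definition row_score (d : nat -> bool) a N j :=
  count (fun r => (r != j) && (if r < j then ~~ d j else d r)) (iota a N).

Lemma row_score_le d a N j : row_score d a N j <= N.
Proof. by rewrite -[leqRHS](size_iota a) count_size. Qed.

Lemma row_scoreS d a N j :
  j \in iota a N -> row_score d a N.+1 j = row_score d a N j + d (a + N).
Proof.
rewrite mem_iota => /andP[aj jN].
rewrite /row_score iotaSr count_cat /= addn0.
by have [-> ->] : (a + N != j) /\ (a + N < j) = false by split; [apply/eqP|apply/negbTE]; lia.
Qed.

Lemma row_score_top d a N : row_score d a N.+1 (a + N) = if d (a + N) then 0 else N.
Proof.
rewrite /row_score iotaSr count_cat /= eqxx.
rewrite (@eq_in_count _ _ (fun _ => ~~ d (a + N))); last first.
  move=> r; rewrite mem_iota => /andP[_ rN].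
  by have [-> ->] : (r != a + N) /\ (r < a + N) by split; [apply/eqP|]; lia.
by case: (d (a + N)); rewrite /= ?count_pred0 ?count_predT ?size_iota; lia.
Qed.

(* Induct on the top position: if d holds there it scores 0 and raises every
   other score by one, otherwise it scores N and leaves the others unchanged. *)
Lemma count_row_score_le d a N t :
  minn t.+1 N <= count (fun j => row_score d a N j <= t) (iota a N).
Proof.
elim: N t => [|N IH] t; first by rewrite minn0.
rewrite iotaSr count_cat /= row_score_top addn0.
rewrite (@eq_in_count _ _ (fun j => row_score d a N j + d (a + N) <= t)); last first.
  by move=> j /row_scoreS ->.
case: (d (a + N)) => /=.
- case: t => [|t]; first lia.
  rewrite (@eq_count _ _ (fun j => row_score d a N j <= t)); last first.
    by move=> j; rewrite addn1 ltnS.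
  by have := IH t; rewrite !minnSS; lia.
- rewrite (@eq_count _ _ (fun j => row_score d a N j <= t)); last first.
    by move=> j; rewrite addn0.
  case: (leqP N t) => [Nt | tN]; last by have := IH t; lia.
  rewrite (@eq_count _ _ predT) ?count_predT ?size_iota; first by lia.
  by move=> j; apply: leq_trans (row_score_le _ _ _ _) Nt.
Qed.

Lemma left_of_between up i j r : i < r -> r < j -> left_of up i j r = ~~ up i j.
Proof.
move=> ir rj; rewrite /left_of /even_order /lo3 /hi3.
have [-> ->] : minn i (minn j r) = i /\ maxn i (maxn j r) = j by lia.
by rewrite (ltn_trans ir rj) ltnNge (ltnW rj) ltnNge (ltnW ir).
Qed.

Lemma left_of_above up i j r : i < j -> j < r -> left_of up i j r = up i r.
Proof.
move=> ij jr; rewrite /left_of /even_order /lo3 /hi3.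
have [-> ->] : minn i (minn j r) = i /\ maxn i (maxn j r) = r by lia.
by rewrite ij jr ltnNge (ltnW (ltn_trans ij jr)).
Qed.

Lemma count_iota_neq2 m i j : 1 <= i -> i < j -> j <= m ->
  count (fun r => (r != i) && (r != j)) (iota 1 m) = m - 2.
Proof.
move=> i1 ij jm.
have i_in : i \in iota 1 m by rewrite mem_iota; lia.
have j_in : j \in iota 1 m by rewrite mem_iota; lia.
have not_both : count (predI (pred1 i) (pred1 j)) (iota 1 m) = 0.
  rewrite (@eq_count _ _ pred0) ?count_pred0 // => r /=.
  by case: eqP => // ->; apply/negbTE; rewrite neq_ltn ij.
have := count_predC (predU (pred1 i) (pred1 j)) (iota 1 m).
have := count_predUI (pred1 i) (pred1 j) (iota 1 m).
rewrite not_both !count_uniq_mem ?iota_uniq // i_in j_in size_iota.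
rewrite (@eq_count _ (predC _) (fun r => (r != i) && (r != j))); first lia.
by move=> r; rewrite /= negb_or.
Qed.

Lemma left_cnt_add_right_cnt up m i j : 1 <= i -> i < j -> j <= m ->
  left_cnt up m i j + right_cnt up m i j = m - 2.
Proof. by move=> i1 ij jm; rewrite count_andC count_iota_neq2. Qed.

Lemma left_cntS up m p q : left_cnt up m.+1 p q =
  left_cnt up m p q + [&& m.+1 != p, m.+1 != q & left_of up p q m.+1].
Proof. by rewrite /left_cnt iotaSr count_cat /= add1n addn0 andbA. Qed.

Lemma right_cntS up m p q : right_cnt up m.+1 p q =
  right_cnt up m p q + [&& m.+1 != p, m.+1 != q & ~~ left_of up p q m.+1].
Proof. by rewrite /right_cnt iotaSr count_cat /= add1n addn0 andbA. Qed.

Definition far_cnt (up : drawing) (m i j : nat) : nat :=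
  count (fun r => (r != i) && (r != j) && (left_of up i j r != left_of up i j m.+1))
    (iota 1 m).

Lemma far_cntE up m i j : far_cnt up m i j =
  if left_of up i j m.+1 then right_cnt up m i j else left_cnt up m i j.
Proof.
by rewrite /far_cnt /right_cnt /left_cnt; case: left_of;
  apply: eq_count => r; case: left_of; rewrite ?andbT ?andbF.
Qed.

(* Adding n only enlarges its own side by one, so for 2t + 2 <= n the index in D
   and a side count in D_1 both equal t exactly when the far side holds t. *)
Lemma invariant_edgeE up m i j t : 1 <= i -> i < j -> j <= m -> 2 * t + 2 <= m.+1 ->
  invariant_edge up m.+1 i j t = (far_cnt up m i j == t).
Proof.
move=> i1 ij jm tm.
have sum_LR := left_cnt_add_right_cnt up i1 ij jm.
have [mi mj] : (m.+1 != i) /\ (m.+1 != j) by split; apply/eqP; lia.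
rewrite /invariant_edge /edge_index left_cntS right_cntS far_cntE mi mj i1 ij ltnS jm /=.
move: sum_LR; case: left_of; rewrite !addn0 !addn1.
all: by move: (left_cnt _ _ _ _) (right_cnt _ _ _ _) => L R sum_LR;
  case: eqP => ?; case: eqP => ?; case: eqP => ? //=; lia.
Qed.

Lemma far_cnt_le_row_score up m i j : 1 <= i -> i < j -> j <= m ->
  far_cnt up m i j <= i.-1 + row_score (fun r => up i r != up i m.+1) i.+1 (m - i) j.
Proof.
move=> i1 ij jm.
have split_row : iota 1 m = iota 1 i.-1 ++ i :: iota i.+1 (m - i).
  rewrite -{1}(subnKC (_ : i.-1 <= m)) ?iotaD; last lia.
  by rewrite add1n prednK // (_ : m - i.-1 = (m - i).+1) //; lia.
rewrite /far_cnt split_row count_cat /= eqxx /= add0n leq_add //.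
  by rewrite -[leqRHS](size_iota 1 i.-1) count_size.
rewrite leq_eqVlt; apply/orP; left; apply/eqP/eq_in_count => r.
rewrite mem_iota => /andP[ir _]; rewrite (@left_of_above up i j m.+1) ?ltnS //.
have -> /= : r != i by rewrite gtn_eqF.
case: (ltngtP r j) => [rj | jr | ->] //.
- by rewrite left_of_between //; case: (up i j); case: (up i m.+1).
- by rewrite left_of_above.
Qed.

Definition row_cnt (up : drawing) (m i k : nat) : nat :=
  count (fun j => far_cnt up m i j <= k) (iota i.+1 (m - i)).

Lemma row_cnt_ge up m i k : 1 <= i -> k.+2 <= m -> k.+2 - i <= row_cnt up m i k.
Proof.
move=> i1 km; case: (leqP i k.+1) => [ik | ]; last by rewrite -subn_eq0 => /eqP ->.
have := count_row_score_le (fun r => up i r != up i m.+1) i.+1 (m - i) (k.+1 - i).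
rewrite (_ : minn _ _ = k.+2 - i) => [small_scores|]; last lia.
apply: leq_trans small_scores _; apply: sub_in_count => j.
rewrite mem_iota => /andP[ij jm] small.
by have := far_cnt_le_row_score up i1 ij (_ : j <= m); lia.
Qed.

Lemma sum_row_cnt up m k : 2 * k + 2 <= m.+1 ->
  \sum_(1 <= i < m.+1) row_cnt up m i k = E_le up m.+1 k.
Proof.
move=> km; apply: eq_big_nat => i /andP[i1 _].
rewrite /row_cnt -sum1_count big_mkcond; apply: eq_big_seq => j.
rewrite mem_iota => /andP[ij jm].
have inv_t t : t <= k -> invariant_edge up m.+1 i j t = (far_cnt up m i j == t).
  by move=> tk; rewrite invariant_edgeE //; lia.
have -> : has (invariant_edge up m.+1 i j) (iota 0 k.+1) = (far_cnt up m i j <= k).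
  apply/hasP/idP => [[t] | far_k].
    by rewrite mem_iota => /andP[_ tk]; rewrite inv_t // => /eqP ->.
  by exists (far_cnt up m i j); rewrite ?mem_iota ?inv_t.
by case: leqP.
Qed.

Section RowCounts.

Variables (up : drawing) (m p : nat).
Hypothesis p_small : 2 * p + 4 <= m.+1.
Hypothesis E_le_tri : forall k, k <= p -> E_le up m.+1 k = 'C(k + 2, 2).

Lemma row_cntE k i : k <= p -> 1 <= i <= m -> row_cnt up m i k = k.+2 - i.
Proof.
move=> kp /andP[i1 im].
have lb : {in index_iota 1 m.+1, forall j, k.+2 - j <= row_cnt up m j k}.
  by move=> j; rewrite mem_index_iota => /andP[j1 _]; apply: row_cnt_ge => //; lia.
have sum_le : \sum_(j <- index_iota 1 m.+1) row_cnt up m j k <=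
              \sum_(j <- index_iota 1 m.+1) (k.+2 - j).
  by rewrite sum_row_cnt ?E_le_tri ?sum_sub_bin2 ?addn2 //; lia.
by rewrite (eq_in_sum_leq lb sum_le) // mem_index_iota; lia.
Qed.

Lemma count_invariant_row k i : k <= p -> 1 <= i <= m ->
  count (fun j => invariant_edge up m.+1 i j k) (iota i.+1 (m.+1 - i)) = (i <= k.+1).
Proof.
move=> kp i_range; have /andP[i1 im] := i_range.
have last_out : invariant_edge up m.+1 i (i.+1 + (m - i)) k = false.
  by rewrite /invariant_edge addSn subnKC // ltnn /= !andbF.
rewrite subSn // iotaSr count_cat /= {}last_out /= addn0.
rewrite (@eq_in_count _ _ (fun j : nat => far_cnt up m i j == k)); last first.
  by move=> j; rewrite mem_iota => /andP[ij jm]; rewrite invariant_edgeE //; lia.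
have := count_leq_eq_ltn (far_cnt up m i) k (iota i.+1 (m - i)).
rewrite -/(row_cnt up m i k) row_cntE //.
case: k kp => [|k] kp.
  rewrite (@eq_count _ (fun j => far_cnt up m i j < 0) pred0) ?count_pred0 //.
  by case: leqP => /= ?; lia.
rewrite (@eq_count _ (fun j => far_cnt up m i j < k.+1) (fun j => far_cnt up m i j <= k)) //.
by rewrite -/(row_cnt up m i k) (row_cntE (ltnW kp) i_range); case: leqP => /= ?; lia.
Qed.

Lemma no_invariant_edge t i j : t <= p -> t + 2 <= i -> i < j <= m.+1 ->
  ~~ invariant_edge up m.+1 i j t.
Proof.
move=> tp ti /andP[ij jm].
have i_range : 1 <= i <= m by apply/andP; split; lia.
have row_empty : ~~ has (fun j => invariant_edge up m.+1 i j t) (iota i.+1 (m.+1 - i)).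
  by rewrite has_count count_invariant_row //; case: leqP => /= ?; lia.
by apply: contra row_empty => inv; apply/hasP; exists j; rewrite ?mem_iota; [lia|].
Qed.

End RowCounts.

Theorem lemma9 (n : nat) (up : drawing) (p : nat) :
  up 1 n ->
  p + 2 <= n./2 ->
  (forall k, k <= p -> E_le up n k = 'C(k + 2, 2)) ->
  (forall i, 1 <= i <= p.+1 ->
     (forall k, i.-1 <= k <= p ->
        count (fun j => invariant_edge up n i j k) (iota i.+1 (n - i)) = 1)
     /\ (forall t j, t + 2 <= i -> i < j <= n -> ~~ invariant_edge up n i j t))
  /\
  (forall i, p + 2 <= i ->
     forall t j, t <= p -> i < j <= n -> ~~ invariant_edge up n i j t).
Proof.
move=> _ half_n E_le_tri.
have n_large : 2 * p + 4 <= n by have := odd_double_half n; rewrite -mul2n; lia.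
case: n half_n E_le_tri n_large => [|m] _ E_le_tri m_large; first lia.
split=> [i /andP[i1 ip] | i pi t j tp]; last first.
  by apply: (no_invariant_edge m_large E_le_tri tp); lia.
split=> [k /andP[ik kp] | t j ti ij].
- rewrite (count_invariant_row m_large E_le_tri kp); last by apply/andP; split; lia.
  by case: leqP => //= ?; lia.
- by apply: (no_invariant_edge m_large E_le_tri); lia.
Qed.
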